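(* Let $(N_1,m_1)$ and $(N_2,m_2)$ be labeled marked Petri nets and $E$ a system of linear constraints with $(N_1,m_1)\vartriangleright_E(N_2,m_2)$. Then for any label $a$ and any symbol $b$ (possibly the silent symbol $\tau$), $(N_1[a/b],m_1)\vartriangleright_E(N_2[a/b],m_2)$.
   Context: A Petri net $N=(P,T,\mathrm{Pre},\mathrm{Post})$ has a finite set of places $P$, a finite set of transitions $T$ disjoint from $P$, and flow functions $\mathrm{Pre},\mathrm{Post}:T\to(P\to\mathbb N)$. A marking is a map $m:P\to\mathbb N$. Transition $t$ is enabled at $m$ if $m(p)\ge\mathrm{Pre}(t,p)$ for all $p$; firing it yields $m'=m-\mathrm{Pre}(t)+\mathrm{Post}(t)$. A firing sequence $\varrho$ leads from $m$ to $m'$ ($m\overset{\varrho}{\Rightarrow}m'$) if its transitions can be fired successively from $m$ reaching $m'$. A labeled net has a labeling $l:T\to\Sigma\cup\{\tau\}$ ($\tau\notin\Sigma$ silent), extended to sequences by $l(\epsilon)=\epsilon$, $\tau$ mapped to $\epsilon$, $l(\varrho t)=l(\varrho)l(t)$. Formulas are Boolean combinations of linear (in)equalities over integer variables; place names are used as variables. For a marking $m$ over $P$, $\underline m\triangleq\bigwedge_{p\in P}(p=m(p))$; $m\models\phi$ means $\phi\wedge\underline m$ is satisfiable over the integers. Markings $m_1$ over $P_1$, $m_2$ over $P_2$ are compatible if they agree on $P_1\cap P_2$; then $m_1\uplus m_2$ is the marking on $P_1\cup P_2$ agreeing with both; $m_1\uplus m_2\models E$ presupposes compatibility. $E$-abstraction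 (for $N_1,N_2$ with labelings $l_1,l_2$ over the same alphabet): $(N_1,m_1)\sqsupseteq_E(N_2,m_2)$ iff (A1) $m_1\uplus m_2\models E$; and (A2) for every firing sequence $m_1\overset{\varrho_1}{\Rightarrow}m_1'$ in $N_1$ there is at least one marking $m_2'$ over $P_2$ with $m_1'\uplus m_2'\models E$, and for every marking $m_2'$ over $P_2$ with $m_1'\uplus m_2'\models E$ there is a firing sequence $\varrho_2$ of $N_2$ with $m_2\overset{\varrho_2}{\Rightarrow}m_2'$ and $l_1(\varrho_1)=l_2(\varrho_2)$. $(N_1,m_1)\vartriangleright_E(N_2,m_2)$ means both directions hold. Relabeling: if $N$ has labeling $l$ over $\Sigma$, $N[a/b]$ is the same net with labeling $l[a/b]$ over $(\Sigma\setminus\{a\})\cup\{b\}$, where $l[a/b](t)=b$ if $l(t)=a$ and $l[a/b](t)=l(t)$ otherwise. *)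

From mathcomp Require Import all_boot all_order all_algebra.
Set Implicit Arguments. Unset Strict Implicit. Unset Printing Implicit Defensive.
Import GRing.Theory Num.Theory.
Local Open Scope ring_scope.

Record lterm (V : Type) := LTerm { lt_coefs : seq (int * V); lt_const : int }.

Definition lterm_eval (V : Type) (t : lterm V) (v : V -> int) : int :=
  \sum_(cx <- lt_coefs t) cx.1 * v cx.2 + lt_const t.

Inductive formula (V : Type) :=
  | FTrue
  | FEq of lterm V & lterm V
  | FLe of lterm V & lterm V
  | FLt of lterm V & lterm V
  | FNot of formula V
  | FAnd of formula V & formula V
  | FOr of formula V & formula V.

Fixpoint feval (V : Type) (f : formula V) (v : V -> int) : Prop :=
  match f with
  | FTrue => True
  | FEq t1 t2 => lterm_eval t1 v = lterm_eval t2 v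
  | FLe t1 t2 => lterm_eval t1 v <= lterm_eval t2 v
  | FLt t1 t2 => lterm_eval t1 v < lterm_eval t2 v
  | FNot g => ~ feval g v
  | FAnd g h => feval g v /\ feval h v
  | FOr g h => feval g v \/ feval h v
  end.

(* Places are a finite type with an injective naming into the variable type V
   (place names are used as variables of formulas).  Labels are in
   option Sym, None being the silent symbol tau. *)
Record net (V Sym : Type) := Net {
  place : finType;
  trans : finType;
  pname : place -> V;
  pname_inj : injective pname;
  pre : trans -> place -> nat;
  post : trans -> place -> nat;
  lab : trans -> option Sym }.

Definition marking (V Sym : Type) (N : net V Sym) := {ffun place N -> nat}.

Definition enabled V Sym (N : net V Sym) (m : marking N) (t : trans N) : bool :=
  [forall p, pre t p <= m p]%N.

Definition fire V Sym (N : net V Sym) (m : marking N) (t : trans N) : marking N :=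
  [ffun p => (m p - pre t p + post t p)%N].

Fixpoint run V Sym (N : net V Sym) (m : marking N) (s : seq (trans N))
  : option (marking N) :=
  match s with
  | [::] => Some m
  | t :: s' => if enabled m t then run (fire m t) s' else None
  end.

Definition leads V Sym (N : net V Sym) (m : marking N) (s : seq (trans N))
  (m' : marking N) : Prop := run m s = Some m'.

Definition word V Sym (N : net V Sym) (s : seq (trans N)) : seq Sym :=
  pmap (@lab V Sym N) s.

(* m1 ⊎ m2 |= E : E ∧ m1 ∧ m2 satisfiable over the integers
   (unsatisfiable if m1, m2 are incompatible). *)
Definition msat V Sym (N1 N2 : net V Sym) (E : formula V)
  (m1 : marking N1) (m2 : marking N2) : Prop :=
  exists v : V -> int, feval E v /\
    (forall p, v (pname p) = (m1 p)%:Z) /\ (forall p, v (pname p) = (m2 p)%:Z).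

Definition abstracts V Sym (N1 N2 : net V Sym) (E : formula V)
  (m1 : marking N1) (m2 : marking N2) : Prop :=
  msat E m1 m2 /\
  forall (s1 : seq (trans N1)) (m1' : marking N1), leads m1 s1 m1' ->
    (exists m2' : marking N2, msat E m1' m2') /\
    (forall m2' : marking N2, msat E m1' m2' ->
       exists s2 : seq (trans N2), leads m2 s2 m2' /\ word s1 = word s2).

Definition equiv_abs V Sym (N1 N2 : net V Sym) (E : formula V)
  (m1 : marking N1) (m2 : marking N2) : Prop :=
  abstracts E m1 m2 /\ abstracts E m2 m1.

Definition relab_fun (Sym : eqType) (a : Sym) (b : option Sym) (l : option Sym)
  : option Sym := if l == Some a then b else l.

Definition relabel V (Sym : eqType) (N : net V Sym) (a : Sym) (b : option Sym)
  : net V Sym :=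
  @Net V Sym (place N) (trans N) (@pname V Sym N) (@pname_inj V Sym N)
    (@pre V Sym N) (@post V Sym N) (fun t => relab_fun a b (lab t)).

From mathcomp Require Import all_boot all_order all_algebra.

(* Relabeling leaves the places, transitions and flow functions untouched, so
   it changes neither firing nor the constraint [E]; it only maps every label
   word through [relab_fun a b], which preserves equality of words. *)

Lemma pmap_obind (A B C : Type) (f : A -> option B) (g : B -> option C)
  (s : seq A) :
  pmap (fun x => obind g (f x)) s = pmap g (pmap f s).
Proof. by elim: s => //= x s IHs; case: (f x) => [y|] /=; rewrite IHs. Qed.

Lemma relab_funE (Sym : eqType) (a : Sym) (b l : option Sym) :
  relab_fun a b l = obind (fun x => relab_fun a b (Some x)) l.
Proof. by case: l. Qed.

Lemma word_relabel (V : Type) (Sym : eqType) (N : net V Sym) (a : Sym)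
  (b : option Sym) (s : seq (trans N)) :
  @word V Sym (relabel N a b) s = pmap (fun x => relab_fun a b (Some x)) (word s).
Proof.
rewrite /word -pmap_obind; apply: eq_pmap => t /=.
exact: relab_funE.
Qed.

Lemma run_relabel (V : Type) (Sym : eqType) (N : net V Sym) (a : Sym)
  (b : option Sym) (m : marking N) (s : seq (trans N)) :
  @run V Sym (relabel N a b) m s = run m s.
Proof. by elim: s m => //= t s IHs m; rewrite IHs. Qed.

Lemma leads_relabel (V : Type) (Sym : eqType) (N : net V Sym) (a : Sym)
  (b : option Sym) (m : marking N) (s : seq (trans N)) (m' : marking N) :
  @leads V Sym (relabel N a b) m s m' <-> leads m s m'.
Proof. by rewrite /leads run_relabel. Qed.

Lemma abstracts_relabel (V : Type) (Sym : eqType) (N1 N2 : net V Sym)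
  (E : formula V) (m1 : marking N1) (m2 : marking N2) (a : Sym) (b : option Sym) :
  abstracts E m1 m2 ->
  @abstracts V Sym (relabel N1 a b) (relabel N2 a b) E m1 m2.
Proof.
move=> [sat_m1m2 simulate]; split=> // s1 m1' /leads_relabel run_s1.
have [sat_m1' reach_m2'] := simulate s1 m1' run_s1; split=> // m2' sat_m2'.
have [s2 [run_s2 same_word]] := reach_m2' m2' sat_m2'.
exists s2; split; first exact/leads_relabel.
by rewrite !word_relabel same_word.
Qed.

Theorem theorem3 (V : Type) (Sym : eqType) (N1 N2 : net V Sym) (E : formula V)
  (m1 : marking N1) (m2 : marking N2) (a : Sym) (b : option Sym) :
  equiv_abs E m1 m2 ->
  @equiv_abs V Sym (relabel N1 a b) (relabel N2 a b) E m1 m2.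
Proof. by move=> [abs12 abs21]; split; apply: abstracts_relabel. Qed.
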